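(* Let $k$ be a field of characteristic zero, $S=k[x_1,\dots,x_n]$, and let $J\subset I$ be homogeneous ideals of $S$ (not necessarily monomial) with $S/J$ Artinian. Let $<$ be any term order on $S$, and denote by $\mathrm{in}_<(\cdot)$ the initial ideal. If the graded $S$-module $\mathrm{in}_<(I)/\mathrm{in}_<(J)$ has the weak Lefschetz property (respectively, the strong Lefschetz property), then the graded $S$-module $I/J$ has the weak Lefschetz property (respectively, the strong Lefschetz property).
   Context: $S$ is standard graded. A finite graded $S$-module $M=\bigoplus_i M_i$ has the weak Lefschetz property if there is a linear form $\ell\in S_1$ such that each multiplication map $\times\ell\colon M_i\to M_{i+1}$ has maximal rank (is injective or surjective); it has the strong Lefschetz property if there is $\ell\in S_1$ such that $\times\ell^d\colon M_i\to M_{i+d}$ has maximal rank for all $d>0$ and all $i$. *)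

From HB Require Import structures.
From mathcomp Require Import all_boot all_order all_algebra.
From mathcomp Require Import mpoly.
Set Implicit Arguments. Unset Strict Implicit. Unset Printing Implicit Defensive.
Import Order.TTheory GRing.Theory.
Local Open Scope ring_scope.

Section Defs.
Variables (k : fieldType) (n : nat).
Local Notation S := {mpoly k[n]}.

Definition is_ideal (I : S -> Prop) : Prop :=
  [/\ I 0,
      (forall f g, I f -> I g -> I (f + g)) &
      (forall r f, I f -> I (r * f))].

Definition is_homogeneous_ideal (I : S -> Prop) : Prop :=
  is_ideal I /\ forall f (d : nat), I f -> I (pihomog mdeg d f).

(* S/J is Artinian: descending chain condition on the ideals of S/J, i.e. on
   the ideals of S containing J. *)
Definition quotient_artinian (J : S -> Prop) : Prop :=
  forall (C : nat -> S -> Prop),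
    (forall m, is_ideal (C m)) ->
    (forall m f, J f -> C m f) ->
    (forall m f, C m.+1 f -> C m f) ->
    exists N, forall m, (N <= m)%N -> forall f, C m f <-> C N f.

Definition term_order (lt : rel 'X_{1..n}) : Prop :=
  [/\ (forall m, ~~ lt m m),
      (forall a b c, lt a b -> lt b c -> lt a c),
      (forall a b, a != b -> lt a b || lt b a),
      (forall a b c, lt a b -> lt (a + c)%MM (b + c)%MM) &
      (forall m, m != 0%MM -> lt 0%MM m)].

Definition is_lead_monom (lt : rel 'X_{1..n}) (f : S) (m : 'X_{1..n}) : Prop :=
  m \in msupp f /\ forall m', m' \in msupp f -> m' != m -> lt m' m.

Definition ideal_gen (G : S -> Prop) : S -> Prop :=
  fun q => exists s : seq (S * S),
    (forall x, x \in s -> G x.2) /\ q = \sum_(x <- s) x.1 * x.2.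

Definition initial_ideal (lt : rel 'X_{1..n}) (I : S -> Prop) : S -> Prop :=
  ideal_gen (fun g => exists f m, [/\ I f, f != 0, is_lead_monom lt f m &
                                      g = 'X_[m]]).

(* For the graded module M = I/J (J ⊆ I homogeneous), with M_i = I_i / J_i:
   multiplication by g : M_i -> M_{i+d} has maximal rank (injective or
   surjective). *)
Definition mul_max_rank (I J : S -> Prop) (g : S) (i d : nat) : Prop :=
  (forall f, I f -> f \is i.-homog -> J (g * f) -> J f)
  \/
  (forall h, I h -> h \is (i + d)%N.-homog ->
     exists f, [/\ I f, f \is i.-homog & J (h - g * f)]).

Definition has_WLP (I J : S -> Prop) : Prop :=
  exists l : S, l \is 1.-homog /\ forall i : nat, mul_max_rank I J l i 1.

Definition has_SLP (I J : S -> Prop) : Prop :=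
  exists l : S, l \is 1.-homog /\
    forall d : nat, (0 < d)%N -> forall i : nat, mul_max_rank I J (l ^+ d) i d.

End Defs.

(* Fix degrees [i] and [d], and let [E_e] be the set of monomials of degree
   [e] that lie in [in(I)] but not in [in(J)]; it is a basis of
   [in(I)_e / in(J)_e].  Choosing for every [m] in [E_i] some [g_m] in [I_i]
   with leading monomial [m], the [g_m] span [I_i / J_i], and normal forms
   modulo [J] give coordinates on [I_(i+d) / J_(i+d)] indexed by [E_(i+d)].
   Multiplication by [(sum_j c_j x_j)^d] is thus given by an [E_i x E_(i+d)]
   matrix [A(c)] whose entries are polynomials in [c]; the same construction
   for [in(I) / in(J)] gives [B(c)].  Once row [m] is multiplied by [c^m],
   every entry of [A] has, for the term order, the same lowest term as the
   corresponding entry of [B], and the entries of [B] have no other term.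
   Hence if a minor of [B(c')] is nonzero, the same minor of [A] is a nonzero
   polynomial, so [rank B(c') <= rank A(c)] off a hypersurface, and maximal
   rank passes from [in(I) / in(J)] to [I / J] for generic [c].
   Since [S/J] is Artinian only finitely many pairs [(i, d)] matter, and over
   the infinite field [k] one [c] serves them all. *)

From HB Require Import structures.
From mathcomp Require Import all_boot all_order all_algebra.
From mathcomp Require Import perm ssrcomplements mpoly.
From Stdlib Require Import ClassicalEpsilon.
Set Implicit Arguments. Unset Strict Implicit. Unset Printing Implicit Defensive.
Import Order.TTheory GRing.Theory.
Local Open Scope ring_scope.

Definition asbool (P : Prop) : bool :=
  if excluded_middle_informative P then true else false.

Lemma asboolP (P : Prop) : reflect P (asbool P).
Proof. by rewrite /asbool; case: excluded_middle_informative => h; constructor. Qed.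

Lemma sum_seq_single (R : nmodType) (I : eqType) (r : seq I) (i : I) (F : I -> R) :
  uniq r -> {in r, forall j, j != i -> F j = 0} ->
  \sum_(j <- r) F j = if i \in r then F i else 0.
Proof.
move=> ur F0; case: ifPn => ir.
  by rewrite (bigD1_seq i) //= big_seq_cond big1 ?addr0 // => j /andP[/F0].
by rewrite big1_seq // => j /andP[_ jr]; apply: F0 => //; apply: contraNneq ir => <-.
Qed.

Lemma mcoeff_pihomog (k : fieldType) (n : nat) d (p : {mpoly k[n]}) u :
  (pihomog mdeg d p)@_u = if mdeg u == d then p@_u else 0.
Proof.
rewrite pihomogE raddf_sum big_mkcond /= (sum_seq_single (i := u)) ?msupp_uniq //.
  case: ifP => [up|/negbT/memN_msupp_eq0 ->]; last by case: eqP.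
  by rewrite eq_sym; case: eqP; rewrite // mcoeffZ mcoeffX eqxx mulr1.
by move=> v _ vu; case: eqP; rewrite // mcoeffZ mcoeffX (negbTE vu) mulr0.
Qed.

Lemma mpolyX_neq0 (k : fieldType) (n : nat) (m : 'X_{1..n}) : 'X_[m] != 0 :> {mpoly k[n]}.
Proof. by rewrite -msupp_eq0 msuppX. Qed.

Section Ideal.
Variables (k : fieldType) (n : nat) (P : {mpoly k[n]} -> Prop).
Hypothesis idP : is_ideal P.

Lemma ideal0 : P 0. Proof. by case: idP. Qed.
Lemma idealD f g : P f -> P g -> P (f + g). Proof. by case: idP => _ h _; apply: h. Qed.
Lemma idealMl r f : P f -> P (r * f). Proof. by case: idP => _ _ h; apply: h. Qed.
Lemma idealMr r f : P f -> P (f * r). Proof. by rewrite mulrC; apply: idealMl. Qed.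
Lemma idealZ c f : P f -> P (c *: f). Proof. by rewrite -mul_mpolyC; apply: idealMl. Qed.
Lemma idealB f g : P f -> P g -> P (f - g).
Proof. by move=> Pf Pg; rewrite -scaleN1r; apply/idealD/idealZ. Qed.

Lemma ideal_sum (I : Type) (r : seq I) (C : pred I) (F : I -> {mpoly k[n]}) :
  (forall i, C i -> P (F i)) -> P (\sum_(i <- r | C i) F i).
Proof. by apply: big_ind; [exact: ideal0 | exact: idealD]. Qed.

End Ideal.

Lemma ideal_gen_ideal (k : fieldType) (n : nat) (G : {mpoly k[n]} -> Prop) :
  is_ideal (ideal_gen G).
Proof.
split.
- by exists [::]; rewrite big_nil; split.
- move=> _ _ [s1 [G1 ->]] [s2 [G2 ->]]; exists (s1 ++ s2); rewrite big_cat; split=> //.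
  by move=> x; rewrite mem_cat => /orP[/G1|/G2].
- move=> r _ [s [Gs ->]]; exists [seq (r * x.1, x.2) | x <- s]; split.
    by move=> _ /mapP[x xs ->]; exact: Gs xs.
  by rewrite big_map mulr_sumr; apply: eq_bigr => x _; rewrite mulrA.
Qed.

Section LinearExtension.
Variables (k : fieldType) (n : nat) (G : 'X_{1..n} -> {mpoly k[n]}).
Local Notation S := {mpoly k[n]}.

Definition mlinext (p : S) : S := \sum_(m <- msupp p) p@_m *: G m.

Lemma mlinextE_bounded (p : S) w : (msize p <= w)%N ->
  mlinext p = \sum_(m : 'X_{1..n < w}) p@_m *: G m.
Proof.
move=> pw; rewrite /mlinext (big_mksub 'X_{1..n < w}) ?msupp_uniq //=; last first.
  by move=> x /msize_mdeg_lt /leq_trans; apply.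
by rewrite big_rmcond //= => m /memN_msupp_eq0 ->; rewrite scale0r.
Qed.

Lemma mlinext_is_linear : linear mlinext.
Proof.
move=> a p q; pose w := maxn (msize p) (msize q).
have pw : (msize p <= w)%N by apply: leq_maxl.
have qw : (msize q <= w)%N by apply: leq_maxr.
have pqw : (msize (a *: p + q) <= w)%N.
  by rewrite (leq_trans (msizeD_le _ _)) // geq_max qw (leq_trans (mmeasureZ_le _ _ _)).
rewrite (mlinextE_bounded pw) (mlinextE_bounded qw) (mlinextE_bounded pqw).
rewrite scaler_sumr -big_split; apply: eq_bigr => m _ /=.
by rewrite mcoeffD mcoeffZ scalerDl scalerA.
Qed.

HB.instance Definition _ := GRing.isLinear.Build k S S *:%R mlinext mlinext_is_linear.

Lemma mcoeff_mlinext p u : (mlinext p)@_u = \sum_(v <- msupp p) p@_v * (G v)@_u.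
Proof. by rewrite raddf_sum; apply: eq_bigr => v _ /=; rewrite mcoeffZ. Qed.

Lemma msupp_mlinext p u :
  u \in msupp (mlinext p) -> exists2 v, v \in msupp p & u \in msupp (G v).
Proof.
rewrite mcoeff_msupp mcoeff_mlinext => nz.
have /hasP[v vp Gv] : has (fun v => u \in msupp (G v)) (msupp p); last by exists v.
apply: contraNT nz => /hasPn Gu; rewrite big1_seq // => v /andP[_ /Gu].
by rewrite mcoeff_msupp negbK => /eqP->; rewrite mulr0.
Qed.

Lemma mlinext_sub_ideal (P : S -> Prop) p : is_ideal P ->
  {in msupp p, forall m, P ('X_[m] - G m)} -> P (p - mlinext p).
Proof.
move=> idP PG; rewrite {1}(mpolyE p) /mlinext -sumrB big_seq_cond.
by apply: (ideal_sum idP) => m /andP[mp _]; rewrite -scalerBr; apply/(idealZ idP)/PG.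
Qed.

End LinearExtension.

Lemma mlinext_mpolyX (k : fieldType) (n : nat) (p : {mpoly k[n]}) :
  mlinext (@mpolyX n k) p = p.
Proof. by rewrite [RHS]mpolyE. Qed.

(** * Term orders and leading monomials *)

Section TermOrder.
Variables (n : nat) (lt : rel 'X_{1..n}).
Hypothesis lt_term : term_order lt.

Definition tle (a b : 'X_{1..n}) := (a == b) || lt a b.

Lemma tltxx m : ~~ lt m m. Proof. by case: lt_term. Qed.

Lemma tlt_trans a b c : lt a b -> lt b c -> lt a c.
Proof. by case: lt_term => _ h _ _ _; apply: h. Qed.

Lemma tlt_total a b : a != b -> lt a b || lt b a.
Proof. by case: lt_term => _ _ h _ _; apply: h. Qed.

Lemma tltDr a b c : lt a b -> lt (a + c)%MM (b + c)%MM.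
Proof. by case: lt_term => _ _ _ h _; apply: h. Qed.

Lemma tle_refl : reflexive tle. Proof. by move=> a; rewrite /tle eqxx. Qed.

Lemma tle_lt_trans a b c : tle a b -> lt b c -> lt a c.
Proof. by case/orP=> [/eqP->//|]; apply: tlt_trans. Qed.

Lemma tle_trans : transitive tle.
Proof.
move=> b a c /orP[/eqP->//|ab] bc; apply/orP; right.
by case/orP: bc => [/eqP<-//|]; apply: tlt_trans.
Qed.

Lemma tle_anti : antisymmetric tle.
Proof.
move=> a b /andP[/orP[/eqP//|ab] /orP[/eqP//|ba]].
by have := tlt_trans ab ba; rewrite (negbTE (tltxx a)).
Qed.

Lemma tleDr a b c : tle a b -> tle (a + c)%MM (b + c)%MM.
Proof. by case/orP=> [/eqP->|ab]; rewrite ?tle_refl // /tle tltDr ?orbT. Qed.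

(* [lt] is well founded on each degree, which contains finitely many monomials. *)
Definition tlt_rank (v : 'X_{1..n}) :=
  #|[pred w : 'X_{1..n < (mdeg v).+1} | (mdeg w == mdeg v) && lt w v]|.

Lemma tlt_rank_lt w v : mdeg w = mdeg v -> lt w v -> (tlt_rank w < tlt_rank v)%N.
Proof.
move=> dw wv; rewrite /tlt_rank dw; apply: proper_card; apply/properP; split.
  by apply/subsetP => x; rewrite !inE => /andP[-> /tlt_trans ->].
have hw : (mdeg w < (mdeg v).+1)%N by rewrite dw.
by exists (BMultinom hw); rewrite !inE /= dw eqxx ?wv ?tltxx.
Qed.

Lemma tlt_homog_ind (P : 'X_{1..n} -> Prop) :
  (forall v, (forall w, mdeg w = mdeg v -> lt w v -> P w) -> P v) -> forall v, P v.
Proof.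
move=> IH v; have [K] := ubnP (tlt_rank v); elim: K v => // K IHK v rv.
by apply: IH => w dw wv; apply: IHK; apply: leq_trans (tlt_rank_lt dw wv) _.
Qed.

End TermOrder.

Section LeadMonomial.
Variables (k : fieldType) (n : nat) (lt : rel 'X_{1..n}).
Hypothesis lt_term : term_order lt.
Local Notation S := {mpoly k[n]}.
Local Notation tle := (tle lt).

Lemma seq_tlt_max (s : seq 'X_{1..n}) : s != [::] ->
  exists2 m, m \in s & {in s, forall w, w != m -> lt w m}.
Proof.
elim: s => [//|x [|y s] IH] _.
  by exists x; rewrite ?mem_head // => w; rewrite inE => ->.
have [m ms mmax] := IH isT.
have [xm|mx] := boolP (lt m x).
  exists x; first exact: mem_head.
  move=> w; rewrite inE => /predU1P[->|ws]; first by rewrite eqxx.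
  move=> _; case: (eqVneq w m) => [->//|wm].
  exact: tlt_trans (mmax _ ws wm) xm.
exists m; first by rewrite inE ms orbT.
move=> w; rewrite inE => /predU1P[-> xm|]; last exact: mmax.
by move: (tlt_total lt_term xm); rewrite (negbTE mx) orbF.
Qed.

Lemma lead_monom_exists (f : S) : f != 0 -> exists m, is_lead_monom lt f m.
Proof.
by rewrite -msupp_eq0 => /seq_tlt_max[m fm mmax]; exists m.
Qed.

Lemma lead_monom_tle (f : S) m : is_lead_monom lt f m -> {in msupp f, forall w, tle w m}.
Proof. by case=> _ mmax w wf; rewrite /tle; case: eqP => //= /eqP; apply: mmax. Qed.

Lemma lead_monomX m : is_lead_monom lt ('X_[m] : S) m.
Proof. by split=> [|w /mem_msuppXP->]; rewrite ?msuppX ?mem_head ?eqxx. Qed.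

Lemma lead_monomMX (f : S) m b :
  is_lead_monom lt f m -> is_lead_monom lt (f * 'X_[b]) (b + m)%MM.
Proof.
case=> fm mmax; split=> [|w]; rewrite (perm_mem (msuppMX f b)); first exact: map_f.
case/mapP=> w' fw' -> ne; rewrite ![(b + _)%MM]addmC in ne *.
by apply: (tltDr lt_term); apply: mmax => //; apply: contraNneq ne => ->.
Qed.

Definition initial_monom (P : S -> Prop) (m : 'X_{1..n}) :=
  exists2 f, P f & is_lead_monom lt f m.

Lemma initial_monomMX (P : S -> Prop) m b :
  is_ideal P -> initial_monom P m -> initial_monom P (b + m)%MM.
Proof.
by move=> idP [f Pf fm]; exists (f * 'X_[b]); [apply: idealMr | apply: lead_monomMX].
Qed.

Lemma initial_ideal_ideal (P : S -> Prop) : is_ideal (initial_ideal lt P).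
Proof. exact: ideal_gen_ideal. Qed.

Lemma initial_idealP (P : S -> Prop) f : is_ideal P ->
  initial_ideal lt P f <-> {in msupp f, forall m, initial_monom P m}.
Proof.
move=> idP; split.
  case=> s [Gs ->] m /msupp_sum_le /flattenP[_ /mapP[x xs ->]].
  rewrite filter_predT in xs; have [g [m' [Pg _ gm' ->]]] := Gs x xs.
  rewrite (perm_mem (msuppMX _ _)) => /mapP[m0 _ ->].
  by rewrite addmC; apply: initial_monomMX => //; exists g.
move=> fP; exists [seq ((f@_m)%:MP, 'X_[m]) | m <- msupp f]; split.
  move=> _ /mapP[m fm ->] /=; have [g Pg gm] := fP m fm.
  exists g, m; split=> //; apply: contraTneq (proj1 gm) => ->.
  by rewrite msupp0.
by rewrite big_map {1}(mpolyE f); apply: eq_bigr => m _; rewrite mul_mpolyC.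
Qed.

Lemma initial_idealX (P : S -> Prop) m : is_ideal P ->
  initial_monom P m -> initial_ideal lt P 'X_[m].
Proof. by move=> idP Pm; apply/initial_idealP => // w /mem_msuppXP<-. Qed.

Definition lead_generator (P : S -> Prop) (m : 'X_{1..n}) (g : S) :=
  [/\ P g, g \is (mdeg m).-homog, g@_m = 1 & {in msupp g, forall w, tle w m}].

Lemma lead_generator_exists (P : S -> Prop) m :
  is_homogeneous_ideal P -> initial_monom P m -> exists g, lead_generator P m g.
Proof.
move=> [idP homP] [f Pf fm]; have fm0 : f@_m != 0 by rewrite -mcoeff_msupp; case: fm.
exists ((f@_m)^-1 *: pihomog mdeg (mdeg m) f); split.
- exact/(idealZ idP)/homP.
- exact/dhomogZ/pihomogP.
- by rewrite mcoeffZ mcoeff_pihomog eqxx mulVf.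
move=> w /msuppZ_le; rewrite mcoeff_msupp mcoeff_pihomog.
case: ifP => _; last by rewrite eqxx.
by rewrite -mcoeff_msupp; apply: lead_monom_tle.
Qed.

Definition lead_gen (P : S -> Prop) (m : 'X_{1..n}) : S :=
  epsilon (inhabits 0) (lead_generator P m).

Lemma lead_genP (P : S -> Prop) m :
  is_homogeneous_ideal P -> initial_monom P m -> lead_generator P m (lead_gen P m).
Proof. by move=> homP Pm; apply: epsilon_spec; apply: lead_generator_exists. Qed.

Lemma msupp_lead_reduce (f g : S) w :
  is_lead_monom lt f w -> g@_w = 1 -> {in msupp g, forall w', tle w' w} ->
  {in msupp (f - f@_w *: g), forall w', lt w' w}.
Proof.
move=> fw gw gle w' w'fg; have ne : w' != w.
  by apply: contraTneq w'fg => ->; rewrite mcoeff_msupp mcoeffB mcoeffZ gw mulr1 subrr eqxx.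
have : tle w' w.
  by move: w'fg => /msuppB_le; rewrite mem_cat => /orP[/(lead_monom_tle fw)|/msuppZ_le/gle].
by rewrite /tle (negbTE ne).
Qed.

End LeadMonomial.

(** * Normal forms modulo a homogeneous ideal *)

Section NormalForm.
Variables (k : fieldType) (n : nat) (lt : rel 'X_{1..n}) (J : {mpoly k[n]} -> Prop).
Hypotheses (lt_term : term_order lt) (homJ : is_homogeneous_ideal J).
Local Notation S := {mpoly k[n]}.
Local Notation standard w := (~ initial_monom lt J w).

Let idJ : is_ideal J. Proof. by case: homJ. Qed.

Definition nf_monom_spec (v : 'X_{1..n}) (r : S) :=
  [/\ J ('X_[v] - r),
      {in msupp r, forall w, [/\ tle lt w v, mdeg w = mdeg v & standard w]} &
      standard v -> r@_v = 1].

Definition nf_monom (v : 'X_{1..n}) : S := epsilon (inhabits 0) (nf_monom_spec v).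

Lemma nf_monomP v : nf_monom_spec v (nf_monom v).
Proof.
elim/(tlt_homog_ind lt_term): v => v IH; apply: epsilon_spec.
have [Jv|stdv] := classic (initial_monom lt J v); last first.
  exists 'X_[v]; split; rewrite ?subrr ?mcoeffX ?eqxx //; first exact: ideal0.
  by move=> w /mem_msuppXP<-; rewrite tle_refl.
have [Jg homg gv gle] := lead_genP homJ Jv.
set q := 'X_[v] - lead_gen lt J v in homg gv gle *.
have qlt : {in msupp q, forall w, lt w v}.
  by have := msupp_lead_reduce (lead_monomX k lt v) gv gle; rewrite mcoeffX eqxx scale1r.
have qdeg : {in msupp q, forall w, mdeg w = mdeg v}.
  by apply/dhomog_mf/rpredB; rewrite ?dhomogX.
exists (mlinext nf_monom q); split.
- rewrite -[X in X - _](subrK (lead_gen lt J v)) -/q addrAC; apply: idealD => //.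
  by apply: mlinext_sub_ideal => // w wq; case: (IH w (qdeg w wq) (qlt w wq)).
- move=> w /msupp_mlinext[u uq]; case: (IH u (qdeg u uq) (qlt u uq)) => _ uP _.
  case/uP=> wu -> stdw; split; rewrite ?qdeg //.
  by rewrite /tle (tle_lt_trans lt_term wu (qlt u uq)) orbT.
- by [].
Qed.

Definition nf : S -> S := mlinext nf_monom.
HB.instance Definition _ := GRing.Linear.on nf.

Lemma nf_sub p : J (p - nf p).
Proof. by apply: mlinext_sub_ideal => // m _; case: (nf_monomP m). Qed.

Lemma msupp_nf p w : w \in msupp (nf p) ->
  standard w /\ exists2 m, m \in msupp p & mdeg w = mdeg m.
Proof.
case/msupp_mlinext=> m pm /=; case: (nf_monomP m) => _ mP _.
by case/mP=> _ dw stdw; split=> //; exists m.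
Qed.

Lemma nf_eq0 p : J p -> nf p = 0.
Proof.
move=> Jp; apply: contraPeq Jp => /(lead_monom_exists lt_term)[w wlead] Jp.
have Jnf : J (nf p) by rewrite -[nf p](subKr p); apply: idealB => //; apply: nf_sub.
by have [stdw _] := msupp_nf (proj1 wlead); apply: stdw; exists (nf p).
Qed.

End NormalForm.

(** * Lowest terms of generic coefficients *)

Section GenericCoef.
Variables (k : fieldType) (n : nat) (d : nat).
Local Notation S := {mpoly k[n]}.
Local Notation L := ((\sum_(i < n) 'X_i) ^+ d : S).

Definition linform (c : 'I_n -> k) : S := \sum_i c i *: 'X_i.

Lemma linform_homog c : linform c \is 1.-homog.
Proof. by apply: rpred_sum => i _; rewrite dhomogZ // dhomogX /= mdeg1. Qed.

Lemma homog1_linform (l : S) : l \is 1.-homog -> l = linform (fun i => l@_U_(i)).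
Proof.
move=> l1; apply/mpolyP => m; rewrite raddf_sum /=.
case: (eqVneq (mdeg m) 1%N) => [/eqP/mdeg1P[i /eqP->]|dm]; last first.
  rewrite (dhomog_nemf_coeff l1 dm) big1 // => i _.
  rewrite mcoeffZ mcoeffX; case: eqP => [im|_]; last by rewrite mulr0.
  by rewrite -im mdeg1 in dm.
rewrite (bigD1 i) //= big1 ?addr0 => [|j ji]; rewrite mcoeffZ mcoeffX eq_mnm1.
  by rewrite eqxx mulr1.
by rewrite (negbTE ji) mulr0.
Qed.

Lemma linformXn_homog c : linform c ^+ d \is d.-homog.
Proof. by have := dhomogMn d (linform_homog c); rewrite mul1n. Qed.

Lemma linformXn c : linform c ^+ d = \sum_(b <- msupp L) (L@_b * ('X_[b] : S).@[c]) *: 'X_[b].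
Proof.
pose t := [tuple c i *: ('X_i : S) | i < n].
have -> : linform c = (\sum_i 'X_i) \mPo t.
  rewrite raddf_sum; apply: eq_bigr => i _ /=.
  by rewrite comp_mpolyXU -tnth_nth tnth_mktuple.
rewrite -rmorphXn /= comp_mpolyE; apply: eq_bigr => b _.
rewrite mevalX -scalerA mpolyXE_id -scaler_prod; congr (_ *: _).
by apply: eq_bigr => i _; rewrite tnth_mktuple exprZn.
Qed.

Definition gencoef (G : 'X_{1..n} -> S) (g : S) (u : 'X_{1..n}) : S :=
  \sum_(b <- msupp L) (L@_b * (mlinext G ('X_[b] * g))@_u) *: 'X_[b].

Lemma meval_gencoef G g u c : (gencoef G g u).@[c] = (mlinext G (linform c ^+ d * g))@_u.
Proof.
rewrite /gencoef raddf_sum linformXn mulr_suml [mlinext G _]linear_sum raddf_sum.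
apply: eq_bigr => b _ /=.
by rewrite mevalZ mevalX -scalerAl linearZ mcoeffZ mulrAC.
Qed.

Lemma mcoeff_gencoef G g u b : (gencoef G g u)@_b = L@_b * (mlinext G ('X_[b] * g))@_u.
Proof.
rewrite /gencoef raddf_sum (sum_seq_single (i := b)) ?msupp_uniq //=.
  by case: ifP => [_|/negbT/memN_msupp_eq0->]; rewrite ?mcoeffZ ?mcoeffX ?eqxx ?mulr1 ?mul0r.
by move=> b' _ bb'; rewrite mcoeffZ mcoeffX (negbTE bb') mulr0.
Qed.

End GenericCoef.

Definition monomial_porder (n : nat) (le : rel 'X_{1..n}) :=
  [/\ reflexive le, transitive le, antisymmetric le &
      forall a b c, le a b -> le (a + c)%MM (b + c)%MM].

Lemma tle_porder (n : nat) (lt : rel 'X_{1..n}) : term_order lt -> monomial_porder (tle lt).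
Proof.
by move=> lt_term; split; [exact: tle_refl | exact: tle_trans | exact: tle_anti | exact: tleDr].
Qed.

Lemma eq_porder (n : nat) : monomial_porder (@eq_op 'X_{1..n}).
Proof. by split=> [a|b a c /eqP-> /eqP->|a b /andP[/eqP]|a b c /eqP->]. Qed.

Section LowestTerm.
Variables (k : fieldType) (n : nat) (le : rel 'X_{1..n}).
Hypothesis le_porder : monomial_porder le.
Local Notation S := {mpoly k[n]}.

Let le_refl : reflexive le. Proof. by case: le_porder. Qed.
Let le_trans : transitive le. Proof. by case: le_porder. Qed.
Let le_anti : antisymmetric le. Proof. by case: le_porder. Qed.
Let leDr a b c : le a b -> le (a + c)%MM (b + c)%MM. Proof. by case: le_porder => _ _ _; apply. Qed.

Lemma leD a b c e : le a b -> le c e -> le (a + c)%MM (b + e)%MM.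
Proof.
move=> ab ce; apply: le_trans (leDr c ab) _.
by rewrite ![(b + _)%MM]addmC; apply: leDr.
Qed.

Lemma leD_eq a b c e : le a b -> le c e -> (a + c)%MM = (b + e)%MM -> a = b.
Proof.
move=> ab ce abce; have : (a + c)%MM = (b + c)%MM.
  apply: le_anti; rewrite leDr //= abce.
  by rewrite ![(b + _)%MM]addmC leDr.
by rewrite ![(_ + c)%MM]addmC => /addmI.
Qed.

Definition lowest_term (q : S) (u : 'X_{1..n}) (s : k) :=
  {in msupp q, forall b, le u b} /\ q@_u = s.

Lemma lowest_term1 : lowest_term 1 0%MM 1.
Proof.
by rewrite /lowest_term msupp1 mcoeff1 eqxx; split=> // b /[1!inE] /eqP->; apply: le_refl.
Qed.

Lemma lowest_termD q1 q2 u s1 s2 :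
  lowest_term q1 u s1 -> lowest_term q2 u s2 -> lowest_term (q1 + q2) u (s1 + s2).
Proof.
move=> [q1u <-] [q2u <-]; split; last exact: mcoeffD.
by move=> b /msuppD_le; rewrite mem_cat => /orP[/q1u|/q2u].
Qed.

Lemma lowest_termZ a q u s : lowest_term q u s -> lowest_term (a *: q) u (a * s).
Proof. by move=> [qu <-]; split; [move=> b /msuppZ_le /qu | rewrite mcoeffZ]. Qed.

Lemma lowest_term_sign (b : bool) q u s :
  lowest_term q u s -> lowest_term ((-1) ^+ b * q) u ((-1) ^+ b * s).
Proof.
move=> qs; rewrite !mulr_sign; case: b => //.
by rewrite -scaleN1r -[- s]mulN1r; apply: lowest_termZ.
Qed.

Lemma lowest_termM q1 q2 u1 u2 s1 s2 :
  lowest_term q1 u1 s1 -> lowest_term q2 u2 s2 ->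
  lowest_term (q1 * q2) (u1 + u2)%MM (s1 * s2).
Proof.
move=> [q1u <-] [q2u <-]; split.
  by move=> b /msuppM_le /allpairsP[[b1 b2] /= [/q1u le1 /q2u le2 ->]]; apply: leD.
rewrite mpolyME big_allpairs raddf_sum (sum_seq_single (i := u1)) ?msupp_uniq //=.
  case: ifPn => [u1q1|/memN_msupp_eq0->]; last by rewrite mul0r.
  rewrite raddf_sum (sum_seq_single (i := u2)) ?msupp_uniq //=.
    case: ifPn => [_|/memN_msupp_eq0->]; last by rewrite mulr0.
    by rewrite mcoeffZ mcoeffX eqxx mulr1.
  move=> b2 /q2u le2 b2u2; rewrite mcoeffZ mcoeffX; case: eqP; rewrite ?mulr0 //.
  by move/esym/addmI => e; rewrite e eqxx in b2u2.
move=> b1 /q1u le1 b1u1; rewrite raddf_sum big1_seq //= => b2 /q2u le2.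
rewrite mcoeffZ mcoeffX; case: eqP; rewrite ?mulr0 // => /esym/(leD_eq le1 le2) e.
by rewrite e eqxx in b1u1.
Qed.

Lemma lowest_term_sum (I : Type) (r : seq I) (F : I -> S) u (s : I -> k) :
  (forall i, lowest_term (F i) u (s i)) ->
  lowest_term (\sum_(i <- r) F i) u (\sum_(i <- r) s i).
Proof.
move=> Fs; elim: r => [|i r IH]; rewrite ?big_nil ?big_cons; last exact: lowest_termD.
by rewrite /lowest_term msupp0 mcoeff0.
Qed.

Lemma lowest_term_prod (I : Type) (r : seq I) (F : I -> S) (u : I -> 'X_{1..n}) (s : I -> k) :
  (forall i, lowest_term (F i) (u i) (s i)) ->
  lowest_term (\prod_(i <- r) F i) (\sum_(i <- r) u i)%MM (\prod_(i <- r) s i).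
Proof.
move=> Fs; elim: r => [|i r IH]; rewrite ?big_nil ?big_cons; last exact: lowest_termM.
exact: lowest_term1.
Qed.

Lemma lowest_term_det r (A : 'M[S]_r) (ms us : 'I_r -> 'X_{1..n}) (s : 'M[k]_r) :
  (forall a b, lowest_term (A a b * 'X_[ms a]) (us b) (s a b)) ->
  lowest_term (\det A * 'X_[\sum_a ms a]) (\sum_b us b)%MM (\det s).
Proof.
move=> As; rewrite /determinant mulr_suml; apply: lowest_term_sum => sg.
rewrite -mulrA; apply: lowest_term_sign.
rewrite [(\sum_b us b)%MM](reindex_inj (@perm_inj _ sg)) -mprodXE -big_split /=.
by apply: lowest_term_prod => a; apply: As.
Qed.

Lemma gencoef_lowest d (G : 'X_{1..n} -> S) (g : S) m u :
  (forall v, {in msupp (G v), forall w, le w v}) -> (G u)@_u = 1 ->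
  g@_m = 1 -> {in msupp g, forall w, le w m} ->
  lowest_term (gencoef d G g u * 'X_[m]) u
    (if (m <= u)%MM then ((\sum_(i < n) 'X_i) ^+ d : S)@_(u - m) else 0).
Proof.
move=> Gle Guu gm gle.
have Xg_le b v : v \in msupp ('X_[b] * g) -> le v (m + b)%MM.
  by rewrite mulrC (perm_mem (msuppMX _ _)) => /mapP[w /gle wm ->]; rewrite addmC leDr.
split=> [x|].
  rewrite (perm_mem (msuppMX _ _)) => /mapP[b]; rewrite mcoeff_msupp mcoeff_gencoef.
  rewrite mulf_eq0 negb_or => /andP[_]; rewrite -mcoeff_msupp.
  case/msupp_mlinext=> v /Xg_le vmb /Gle uv ->.
  exact: le_trans uv vmb.
case: ifPn => mu; last first.
  apply: memN_msupp_eq0; rewrite (perm_mem (msuppMX _ _)).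
  by apply/mapP => -[b _ ub]; rewrite ub lem_addr in mu.
set b := (u - m)%MM; have um : u = (m + b)%MM by rewrite addmC submK.
have -> : (gencoef d G g u * 'X_[m])@_u = (gencoef d G g u)@_b.
  by rewrite {1}um mcoeffMX.
rewrite -[RHS]mulr1 mcoeff_gencoef; congr (_ * _).
have Xgu : ('X_[b] * g)@_u = 1 by rewrite mulrC [in LHS]um addmC mcoeffMX.
rewrite mcoeff_mlinext (sum_seq_single (i := u)) ?msupp_uniq //.
  by rewrite mcoeff_msupp Xgu oner_neq0 mul1r.
move=> v /Xg_le; rewrite -um => vu vneu; apply/eqP; rewrite mulf_eq0; apply/orP; right.
by rewrite mcoeff_eq0; apply: contra vneu => /Gle uv; apply/eqP/le_anti; rewrite vu uv.
Qed.

End LowestTerm.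

Lemma lowest_term_eq_op (k : fieldType) (n : nat) (q : {mpoly k[n]}) u s :
  lowest_term eq_op q u s -> q = s *: 'X_[u].
Proof.
move=> [qu <-]; apply/mpolyP => b; rewrite mcoeffZ mcoeffX.
have [<-|ub] := eqVneq u b; first by rewrite mulr1.
by rewrite mulr0; apply: memN_msupp_eq0; apply: contra ub => /qu.
Qed.

Lemma det_degeneration_neq0 (k : fieldType) (n : nat) (lt : rel 'X_{1..n})
    r (A B : 'M[{mpoly k[n]}]_r) (ms us : 'I_r -> 'X_{1..n}) (s : 'M[k]_r) :
  term_order lt ->
  (forall a b, lowest_term (tle lt) (A a b * 'X_[ms a]) (us b) (s a b)) ->
  (forall a b, lowest_term eq_op (B a b * 'X_[ms a]) (us b) (s a b)) ->
  \det B != 0 -> \det A != 0.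
Proof.
move=> lt_term As Bs; have [_ Ads] := lowest_term_det (tle_porder lt_term) As.
have /lowest_term_eq_op Bds := lowest_term_det (@eq_porder n) Bs.
apply: contraNneq => A0; move: Bds; rewrite -Ads A0 mul0r mcoeff0 scale0r.
by move/eqP; rewrite mulf_eq0 (negbTE (mpolyX_neq0 _ _)) orbF => ->.
Qed.

(** * Generic ranks *)

Section Minors.
Variables (F : fieldType) (m N : nat) (M : 'M[F]_(m, N)).

Lemma mxrank_unit_minor :
  exists f : 'I_(\rank M) -> 'I_m, exists g : 'I_(\rank M) -> 'I_N, mxsub f g M \in unitmx.
Proof.
pose f := maxrankfun M; have fullT : row_full (rowsub f M)^T.
  by rewrite /row_full mxrank_tr; apply: maxrowsub_free.
exists f, (fullrankfun fullT); rewrite -unitmx_tr.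
have -> : (mxsub f (fullrankfun fullT) M)^T = rowsub (fullrankfun fullT) (rowsub f M)^T.
  by apply/matrixP => i j; rewrite !mxE.
exact: fullrowsub_unit.
Qed.

Lemma unit_minor_mxrank r (f : 'I_r -> 'I_m) (g : 'I_r -> 'I_N) :
  mxsub f g M \in unitmx -> (r <= \rank M)%N.
Proof.
rewrite -row_free_unit => /eqP <-; rewrite mxsubrc (leq_trans (mxrankS (rowsub_sub _ _))) //.
by rewrite -mxrank_tr trmx_mxsub -[leqRHS]mxrank_tr mxrankS ?rowsub_sub.
Qed.

End Minors.

Section Generic.
Variables (k : fieldType) (n : nat).

Definition generic (P : ('I_n -> k) -> Prop) :=
  exists2 Q : {mpoly k[n]}, Q != 0 & forall c, Q.@[c] != 0 -> P c.

Lemma generic_all (T : eqType) (s : seq T) (P : T -> ('I_n -> k) -> Prop) :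
  (forall x, x \in s -> generic (P x)) -> generic (fun c => forall x, x \in s -> P x c).
Proof.
elim: s => [|x s IH] Ps; first by exists 1 => [|c _ x]; rewrite ?oner_eq0.
have [Q1 Q1nz Q1P] := Ps x (mem_head _ _).
have [|Q2 Q2nz Q2P] := IH; first by move=> y ys; apply: Ps; rewrite inE ys orbT.
exists (Q1 * Q2) => [|c]; first by rewrite mulf_neq0.
rewrite mevalM mulf_eq0 negb_or => /andP[/Q1P P1 /Q2P P2] y.
by rewrite inE => /predU1P[->|/P2].
Qed.

Lemma generic_rank_degeneration (lt : rel 'X_{1..n}) m N
    (A B : 'M[{mpoly k[n]}]_(m, N)) (ms : 'I_m -> 'X_{1..n}) (us : 'I_N -> 'X_{1..n})
    (s : 'M[k]_(m, N)) (c' : 'I_n -> k) :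
  term_order lt ->
  (forall a b, lowest_term (tle lt) (A a b * 'X_[ms a]) (us b) (s a b)) ->
  (forall a b, lowest_term eq_op (B a b * 'X_[ms a]) (us b) (s a b)) ->
  generic (fun c => \rank (map_mx (meval c') B) <= \rank (map_mx (meval c) A))%N.
Proof.
move=> lt_term As Bs; have [f [g Bfg]] := mxrank_unit_minor (map_mx (meval c') B).
exists (\det (mxsub f g A)) => [|c].
  apply: (det_degeneration_neq0 (B := mxsub f g B) (ms := ms \o f) (us := us \o g)
                                (s := mxsub f g s) lt_term).
  - by move=> a b; rewrite !mxE; apply: As.
  - by move=> a b; rewrite !mxE; apply: Bs.
  - by apply: contraTneq Bfg => B0; rewrite unitmxE unitfE -map_mxsub det_map_mx B0 raddf0 eqxx.
by rewrite -det_map_mx map_mxsub -unitfE -unitmxE; apply: unit_minor_mxrank.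
Qed.

End Generic.

Section CharZero.
Variable k : fieldType.
Hypothesis k0 : [pchar k] =i pred0.

Lemma pchar0_natr_inj : injective (fun i : nat => i%:R : k).
Proof.
have natr0 := (pcharf0P k).1 k0.
move=> i j; wlog ij : i j / (i <= j)%N => [W e|].
  by case: (leqP i j) => [|/ltnW] /W; [apply | move=> ->].
move/eqP; rewrite eq_sym -subr_eq0 -natrB // natr0 subn_eq0 => ji.
by apply/eqP; rewrite eqn_leq ij.
Qed.

Lemma poly_nonroot (p : {poly k}) : p != 0 -> exists x, ~~ root p x.
Proof.
move=> p0; pose xs := [seq i%:R : k | i <- iota 0 (size p)].
have xs_uniq : uniq xs by rewrite map_inj_uniq ?iota_uniq //; apply: pchar0_natr_inj.
have /allPn[x _ px] : ~~ all (root p) xs.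
  by apply/negP => /(max_poly_roots p0)/(_ xs_uniq); rewrite size_map size_iota ltnn.
by exists x.
Qed.

Lemma mpoly_nonroot n (Q : {mpoly k[n]}) : Q != 0 -> exists c : 'I_n -> k, Q.@[c] != 0.
Proof.
elim: n Q => [|n IH] Q Q0.
  by exists (fun _ => 0); move: Q0; rewrite [Q]nvar0_mpolyC mevalC mpolyC_eq0.
pose r (m : 'X_{1..n.+1}) : 'X_{1..n} := [multinom m (lift ord_max i) | i < n].
have r_inj m m' : r m = r m' -> m ord_max = m' ord_max -> m = m'.
  move=> /mnmP rm mlast; apply/mnmP => i; case: (unliftP ord_max i) => [j ->|-> //].
  by have := rm j; rewrite !mnmE.
(* [Qj j] is the coefficient of [x_n ^ j] in [Q], a polynomial in the other variables. *)
pose Qj j : {mpoly k[n]} := \sum_(m <- msupp Q | m ord_max == j) Q@_m *: 'X_[r m].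
have [m0 m0Q] : exists m0, m0 \in msupp Q.
  by move: Q0; rewrite -msupp_eq0; case: (msupp Q) => // m0 s _; exists m0; apply: mem_head.
have Qj0 : Qj (m0 ord_max) != 0.
  apply/eqP => /(congr1 (mcoeff (r m0))); rewrite mcoeff0 raddf_sum big_mkcond /=.
  rewrite (sum_seq_single (i := m0)) ?msupp_uniq //.
    case: ifPn => [_|/negP/(_ m0Q)//] /=; rewrite eqxx mcoeffZ mcoeffX eqxx mulr1.
    by move/eqP; rewrite mcoeff_eq0 m0Q.
  move=> m _ mm0; case: eqP => // mlast; rewrite mcoeffZ mcoeffX.
  case: eqP => [/r_inj/(_ mlast) e|_]; last by rewrite mulr0.
  by rewrite e eqxx in mm0.
have [v Qjv] := IH _ Qj0.
pose q : {poly k} := \sum_(m <- msupp Q) (Q@_m * ('X_[r m]).@[v]) *: 'X^(m ord_max).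
have q0 : q != 0.
  apply: contraNneq Qjv => /(congr1 (fun p : {poly k} => p`_(m0 ord_max))).
  rewrite coef0 coef_sum => <-; rewrite raddf_sum big_mkcond /=; apply/eqP.
  apply: eq_bigr => m _; rewrite coefZ coefXn eq_sym.
  by case: eqP; rewrite ?mulr1 ?mulr0 // mevalZ.
have [t qt] := poly_nonroot q0.
exists (fun i => if unlift ord_max i is Some j then v j else t).
apply: contraNneq qt => Q0t; apply/rootP; rewrite -Q0t mevalE horner_sum.
apply: eq_bigr => m _; rewrite hornerZ hornerXn -mulrA mevalX big_ord_recr /= unlift_none.
congr (_ * (_ * _)); apply: eq_bigr => i _.
rewrite (_ : widen_ord _ i = lift ord_max i) ?liftK ?mnmE //.
by apply: val_inj; rewrite /= /bump leqNgt ltn_ord.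
Qed.

Lemma generic_witness n (P : ('I_n -> k) -> Prop) : generic P -> exists c, P c.
Proof. by case=> Q /mpoly_nonroot[c Qc] QP; exists c; apply: QP. Qed.

End CharZero.

(** * Multiplication by a generic power of a linear form *)

Section StandardMonomials.
Variables (k : fieldType) (n : nat) (lt : rel 'X_{1..n}) (I J : {mpoly k[n]} -> Prop).
Hypotheses (lt_term : term_order lt) (homI : is_homogeneous_ideal I).
Hypotheses (homJ : is_homogeneous_ideal J) (JI : forall f, J f -> I f).
Local Notation S := {mpoly k[n]}.

Let idI : is_ideal I. Proof. by case: homI. Qed.
Let idJ : is_ideal J. Proof. by case: homJ. Qed.

(* A monomial basis of [in(I)_e / in(J)_e]. *)
Definition std_monoms (e : nat) : {set 'X_{1..n < e.+1}} :=
  [set m : 'X_{1..n < e.+1} |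
     (mdeg m == e) && asbool (initial_monom lt I m /\ ~ initial_monom lt J m)].

Definition std_monom e (a : 'I_#|std_monoms e|) : 'X_{1..n} := val (enum_val a).

Lemma std_monomP e (a : 'I_#|std_monoms e|) : [/\ mdeg (std_monom a) = e,
  initial_monom lt I (std_monom a) & ~ initial_monom lt J (std_monom a)].
Proof. by have := enum_valP a; rewrite inE => /andP[/eqP-> /asboolP[]]. Qed.

Lemma std_monom_inj e : injective (@std_monom e).
Proof. by move=> a b /val_inj/enum_val_inj. Qed.

Lemma std_monom_surj e w : mdeg w = e -> initial_monom lt I w -> ~ initial_monom lt J w ->
  exists a : 'I_#|std_monoms e|, std_monom a = w.
Proof.
move=> dw Iw Jw; have we : (mdeg w < e.+1)%N by rewrite dw.
have wE : BMultinom we \in std_monoms e by rewrite inE dw eqxx; apply/asboolP.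
by exists (enum_rank_in wE (BMultinom we)); rewrite /std_monom enum_rankK_in.
Qed.

Definition std_gen e (a : 'I_#|std_monoms e|) : S := lead_gen lt I (std_monom a).

Lemma std_genP e (a : 'I_#|std_monoms e|) : lead_generator lt I (std_monom a) (std_gen a).
Proof. by apply: lead_genP => //; case: (std_monomP a). Qed.

Lemma std_gen_span e f : I f -> f \is e.-homog ->
  exists x : 'rV[k]_#|std_monoms e|, J (f - \sum_a x 0 a *: std_gen a).
Proof.
pose sp f := exists x : 'rV[k]_#|std_monoms e|, J (f - \sum_a x 0 a *: std_gen a).
have sp0 g : J g -> sp g.
  by move=> Jg; exists 0; rewrite big1 ?subr0 // => a _; rewrite mxE scale0r.
have spD g h : sp g -> sp h -> sp (g + h).
  move=> [x Jx] [y Jy]; exists (x + y).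
  rewrite (eq_bigr (fun a => x 0 a *: std_gen a + y 0 a *: std_gen a)) => [|a _].
    by rewrite big_split /= opprD addrACA; apply: idealD.
  by rewrite mxE scalerDl.
move=> If fe; have [->|f0] := eqVneq f 0; first by apply: sp0; apply: ideal0.
have [w fw] := lead_monom_exists lt_term f0.
elim/(tlt_homog_ind lt_term): w f If fe fw {f0} => w IH f If fe fw.
have dw : mdeg w = e := dhomog_mf fe (proj1 fw).
have [g [Ig ge gw gle spg]] : exists g, [/\ I g, g \is e.-homog, g@_w = 1,
    {in msupp g, forall w', tle lt w' w} & sp (f@_w *: g)].
  have [Jw|stdw] := classic (initial_monom lt J w).
    have [Jg ge gw gle] := lead_genP homJ Jw; rewrite dw in ge.
    by exists (lead_gen lt J w); split=> //; [apply: JI | apply: sp0; apply: idealZ].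
  have [a aw] := std_monom_surj dw (ex_intro2 _ _ f If fw) stdw.
  have [Ig ge gw gle] := std_genP a; rewrite aw dw in ge; rewrite aw in gw gle.
  exists (std_gen a); split=> //; exists (f@_w *: delta_mx 0 a).
  rewrite (bigD1 a) //= big1 => [|b ba].
    by rewrite !mxE !eqxx mulr1 addr0 subrr; apply: ideal0.
  by rewrite !mxE (negbTE ba) andbF mulr0 scale0r.
set f' := f - f@_w *: g.
have If' : I f' by apply: idealB => //; apply: idealZ.
have f'e : f' \is e.-homog by rewrite rpredB ?rpredZ.
have f'w := msupp_lead_reduce fw gw gle.
have spf' : sp f'.
  have [->|f'0] := eqVneq f' 0; first by apply: sp0; apply: ideal0.
  have [w' f'w'] := lead_monom_exists lt_term f'0.
  by apply: (IH w') => //; [rewrite (dhomog_mf f'e (proj1 f'w')) | apply: f'w (proj1 f'w')].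
by rewrite -(subrK (f@_w *: g) f); apply: spD.
Qed.

Definition nf_coords e (p : S) : 'rV[k]_#|std_monoms e| := \row_b (nf lt J p)@_(std_monom b).
Definition init_coords e (p : S) : 'rV[k]_#|std_monoms e| := \row_b p@_(std_monom b).

Lemma nf_coordsB e p q : nf_coords e (p - q) = nf_coords e p - nf_coords e q.
Proof. by apply/rowP => b; rewrite !mxE linearB mcoeffB. Qed.

Lemma init_coordsB e p q : init_coords e (p - q) = init_coords e p - init_coords e q.
Proof. by apply/rowP => b; rewrite !mxE mcoeffB. Qed.

Lemma nf_coords_ideal e p : J p -> nf_coords e p = 0.
Proof. by move=> Jp; apply/rowP => b; rewrite !mxE nf_eq0 ?mcoeff0. Qed.

Lemma nf_coords_eq0 e p : I p -> p \is e.-homog -> nf_coords e p = 0 -> J p.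
Proof.
move=> Ip pe p0; suff nf0 : nf lt J p = 0 by have := nf_sub lt_term homJ p; rewrite nf0 subr0.
apply: contraPeq p0 => /(lead_monom_exists lt_term)[w wnf] p0.
have [stdw [m pm dwm]] := msupp_nf lt_term homJ (proj1 wnf).
have Inf : I (nf lt J p).
  by rewrite -[nf _ _ p](subKr p); apply: idealB => //; apply: JI; exact: nf_sub.
have dw : mdeg w = e by rewrite dwm (dhomog_mf pe pm).
have [a aw] := std_monom_surj dw (ex_intro2 _ _ (nf lt J p) Inf wnf) stdw.
by move/rowP/(_ a): p0; rewrite !mxE aw => /eqP; rewrite mcoeff_eq0 (proj1 wnf).
Qed.

Lemma init_coords_initial e p : initial_ideal lt J p -> init_coords e p = 0.
Proof.
move=> /(initial_idealP lt_term _ idJ) Jp; apply/rowP => a; rewrite !mxE.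
by have [_ _ stda] := std_monomP a; apply/eqP; rewrite mcoeff_eq0; apply/negP => /Jp.
Qed.

Lemma init_coords_eq0 e p : initial_ideal lt I p -> p \is e.-homog -> init_coords e p = 0 ->
  initial_ideal lt J p.
Proof.
move=> /(initial_idealP lt_term _ idI) Ip pe p0; apply/(initial_idealP lt_term _ idJ) => w wp.
have [//|stdw] := classic (initial_monom lt J w).
have [a aw] := std_monom_surj (dhomog_mf pe wp) (Ip w wp) stdw.
by move/rowP/(_ a): p0; rewrite !mxE aw => /eqP; rewrite mcoeff_eq0 wp.
Qed.

Lemma init_coords_std e (x : 'rV[k]_#|std_monoms e|) :
  init_coords e (\sum_a x 0 a *: 'X_[std_monom a]) = x.
Proof.
apply/rowP => b; rewrite !mxE raddf_sum (bigD1 b) //= big1 ?addr0 => [|a ab].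
  by rewrite mcoeffZ mcoeffX eqxx mulr1.
by rewrite mcoeffZ mcoeffX (inj_eq (@std_monom_inj e)) (negbTE ab) mulr0.
Qed.

Lemma initial_std_comb e (x : 'rV[k]_#|std_monoms e|) :
  initial_ideal lt I (\sum_a x 0 a *: 'X_[std_monom a]) /\
  \sum_a x 0 a *: 'X_[std_monom a] \is e.-homog.
Proof.
split; first apply: (ideal_sum (initial_ideal_ideal lt I)) => a _.
  by apply/(idealZ (initial_ideal_ideal lt I))/initial_idealX => //; case: (std_monomP a).
by apply: rpred_sum => a _; rewrite rpredZ // dhomogX; case: (std_monomP a) => /= ->.
Qed.

Lemma initial_std_span e p : initial_ideal lt I p -> p \is e.-homog ->
  initial_ideal lt J (p - \sum_a init_coords e p 0 a *: 'X_[std_monom a]).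
Proof.
move=> Ip pe; have [Ix xe] := initial_std_comb (init_coords e p).
apply: (init_coords_eq0 (e := e)); rewrite ?init_coordsB ?init_coords_std ?subrr ?rpredB //.
by apply: idealB => //; apply: initial_ideal_ideal.
Qed.

Lemma mul_gencoef_mx d e e' (G : 'X_{1..n} -> S) (gs : 'I_#|std_monoms e| -> S)
    (x : 'rV[k]_#|std_monoms e|) c :
  x *m map_mx (meval c) (\matrix_(a, b) gencoef d G (gs a) (@std_monom e' b)) =
  \row_b (mlinext G (linform c ^+ d * \sum_a x 0 a *: gs a))@_(std_monom b).
Proof.
apply/rowP => b; rewrite !mxE mulr_sumr [mlinext G _]linear_sum raddf_sum.
by apply: eq_bigr => a _ /=; rewrite !mxE meval_gencoef -scalerAr linearZ mcoeffZ.
Qed.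

Section Multiplication.
Variables (d i : nat).

Definition nf_mulmx : 'M[S]_(#|std_monoms i|, #|std_monoms (i + d)|) :=
  \matrix_(a, b) gencoef d (nf_monom lt J) (std_gen a) (std_monom b).

Definition init_mulmx : 'M[S]_(#|std_monoms i|, #|std_monoms (i + d)|) :=
  \matrix_(a, b) gencoef d (@mpolyX n k) 'X_[std_monom a] (std_monom b).

Lemma nf_mulmxE c x : x *m map_mx (meval c) nf_mulmx =
  nf_coords (i + d) (linform c ^+ d * \sum_a x 0 a *: std_gen a).
Proof. exact: mul_gencoef_mx. Qed.

Lemma init_mulmxE c x : x *m map_mx (meval c) init_mulmx =
  init_coords (i + d) (linform c ^+ d * \sum_a x 0 a *: 'X_[std_monom a]).
Proof. by rewrite mul_gencoef_mx; apply/rowP => b; rewrite !mxE mlinext_mpolyX. Qed.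

Lemma generic_mulmx_rank c' :
  generic (fun c => \rank (map_mx (meval c') init_mulmx) <= \rank (map_mx (meval c) nf_mulmx))%N.
Proof.
apply: (generic_rank_degeneration (ms := @std_monom i) (us := @std_monom (i + d))
  (s := \matrix_(a, b) if (std_monom a <= std_monom b)%MM
                      then ((\sum_(j < n) 'X_j) ^+ d : S)@_(std_monom b - std_monom a) else 0)
  c' lt_term) => a b; rewrite !mxE; apply: gencoef_lowest.
- exact: tle_porder.
- by move=> v w; case: (nf_monomP lt_term homJ v) => _ vP _ /vP[].
- by case: (nf_monomP lt_term homJ (std_monom b)) => _ _ ->; case: (std_monomP b).
- by case: (std_genP a).
- by case: (std_genP a).
- exact: eq_porder.
- by move=> v w /mem_msuppXP->.
- by rewrite mcoeffX eqxx.
- by rewrite mcoeffX eqxx.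
- by move=> w /mem_msuppXP->.
Qed.

Lemma init_mulmx_row_free c' :
  (forall f, initial_ideal lt I f -> f \is i.-homog ->
     initial_ideal lt J (linform c' ^+ d * f) -> initial_ideal lt J f) ->
  row_free (map_mx (meval c') init_mulmx).
Proof.
move=> inj; apply: inj_row_free => x; rewrite init_mulmxE => x0.
have [Ix xe] := initial_std_comb x.
rewrite -(init_coords_std x); apply/init_coords_initial/inj => //.
apply: (init_coords_eq0 _ _ x0); first exact: idealMl (initial_ideal_ideal lt I) _ _ Ix.
by rewrite addnC dhomogM ?linformXn_homog.
Qed.

Lemma init_mulmx_row_full c' :
  (forall h, initial_ideal lt I h -> h \is (i + d).-homog ->
     exists f, [/\ initial_ideal lt I f, f \is i.-homog &
                   initial_ideal lt J (h - linform c' ^+ d * f)]) ->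
  row_full (map_mx (meval c') init_mulmx).
Proof.
move=> surj; rewrite -sub1mx; apply/row_subP => b; apply/submxP.
set v := row b 1%:M; have [Ih he] := initial_std_comb v.
have [f [If fe Jhf]] := surj _ Ih he.
exists (init_coords i f); apply/eqP; rewrite init_mulmxE -subr_eq0 -[X in X - _]init_coords_std.
rewrite -init_coordsB; apply/eqP/init_coords_initial.
set h := \sum_a _; set q := \sum_a _.
have -> : h - linform c' ^+ d * q = h - linform c' ^+ d * f + linform c' ^+ d * (f - q).
  by rewrite mulrBr addrA subrK.
apply: (idealD (initial_ideal_ideal lt J) Jhf).
by apply: idealMl; [exact: initial_ideal_ideal | exact: initial_std_span].
Qed.

Lemma nf_mulmx_injective c : row_free (map_mx (meval c) nf_mulmx) ->
  forall f, I f -> f \is i.-homog -> J (linform c ^+ d * f) -> J f.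
Proof.
move=> free f If fe Jlf; have [x Jfx] := std_gen_span If fe.
suff x0 : x = 0 by move: Jfx; rewrite x0 big1 ?subr0 // => a _; rewrite mxE scale0r.
apply/eqP; rewrite -(mulmx_free_eq0 _ free) nf_mulmxE.
set q := \sum_a _; rewrite -[q](subKr f) mulrBr nf_coordsB.
by rewrite !nf_coords_ideal ?subrr //; apply: idealMl.
Qed.

Lemma std_gen_comb (x : 'rV[k]_#|std_monoms i|) :
  I (\sum_a x 0 a *: std_gen a) /\ \sum_a x 0 a *: std_gen a \is i.-homog.
Proof.
split; first by apply: (ideal_sum idI) => a _; apply: (idealZ idI); case: (std_genP a).
apply: rpred_sum => a _; apply: rpredZ.
by case: (std_genP a) => _; case: (std_monomP a) => ->.
Qed.

Lemma nf_mulmx_surjective c : row_full (map_mx (meval c) nf_mulmx) ->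
  forall h, I h -> h \is (i + d).-homog ->
  exists f, [/\ I f, f \is i.-homog & J (h - linform c ^+ d * f)].
Proof.
move=> full h Ih he; have /submxP[x hx] := submx_full (nf_coords (i + d) h) full.
have [If fe] := std_gen_comb x; exists (\sum_a x 0 a *: std_gen a); split=> //.
apply: (nf_coords_eq0 (e := i + d)).
- by apply: idealB => //; apply: idealMl.
- by rewrite rpredB // addnC dhomogM ?linformXn_homog.
- by rewrite nf_coordsB hx nf_mulmxE subrr.
Qed.

Lemma generic_mul_max_rank c' :
  mul_max_rank (initial_ideal lt I) (initial_ideal lt J) (linform c' ^+ d) i d ->
  generic (fun c => mul_max_rank I J (linform c ^+ d) i d).
Proof.
move=> max; have [Q Q0 QP] := generic_mulmx_rank c'; exists Q => // c /QP rk.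
case: max => [/init_mulmx_row_free|/init_mulmx_row_full] B; [left | right].
  apply: nf_mulmx_injective; rewrite /row_free eqn_leq rank_leq_row /=.
  by apply: leq_trans rk; rewrite (eqP B).
apply: nf_mulmx_surjective; rewrite /row_full eqn_leq rank_leq_col /=.
by apply: leq_trans rk; rewrite (eqP B).
Qed.

End Multiplication.

End StandardMonomials.

(** * Transfer of the Lefschetz properties *)

Lemma artinian_homog_large (k : fieldType) (n : nat) (J : {mpoly k[n]} -> Prop) :
  is_homogeneous_ideal J -> quotient_artinian J ->
  exists N, forall e f, (N <= e)%N -> f \is e.-homog -> J f.
Proof.
move=> [idJ homJ] artJ.
pose C m f := exists2 j, J j & {in msupp (f - j), forall w, (m <= mdeg w)%N}.
have idC m : is_ideal (C m).
  split.
  - by exists 0; rewrite ?subr0 ?msupp0 //; apply: ideal0.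
  - move=> f g [j1 Jj1 fj1] [j2 Jj2 gj2]; exists (j1 + j2); first exact: idealD.
    by move=> w; rewrite opprD addrACA => /msuppD_le; rewrite mem_cat => /orP[/fj1|/gj2].
  - move=> r f [j Jj fj]; exists (r * j); first exact: idealMl.
    move=> w; rewrite -mulrBr => /msuppM_le /allpairsP[[w1 w2] /= [_ /fj le ->]].
    by rewrite mdegD (leq_trans le) ?leq_addl.
have CJ m f : J f -> C m f by move=> Jf; exists f; rewrite ?subrr ?msupp0.
have Cdec m f : C m.+1 f -> C m f by case=> j Jj fj; exists j => // w /fj/ltnW.
(* [C m] is [J + S_{>= m}]; once the chain is stable, a form of degree [e >= N]
   lies in [J + S_{> e}], hence in [J]. *)
have [N CN] := artJ C idC CJ Cdec.
exists N => e f Ne fe.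
have /(CN _ Ne _).1/(CN _ (leqW Ne) _).2 [j Jj fj] : C e f.
  by exists 0; rewrite ?subr0; [apply: ideal0 | move=> w /(dhomog_mf fe)->].
suff -> : f = pihomog mdeg e j by apply: homJ.
apply/mpolyP => w; rewrite mcoeff_pihomog; case: eqP => [dw|]; last first.
  by move=> /eqP; apply: dhomog_nemf_coeff.
apply/eqP; rewrite -subr_eq0 -mcoeffB mcoeff_eq0; apply: contraTN isT => /fj.
by rewrite dw ltnn.
Qed.

Lemma lefschetz_transfer (k : fieldType) (n : nat) (I J : {mpoly k[n]} -> Prop)
    (lt : rel 'X_{1..n}) (D : pred nat) (l : {mpoly k[n]}) :
  [pchar k] =i pred0 -> term_order lt ->
  is_homogeneous_ideal I -> is_homogeneous_ideal J -> (forall f, J f -> I f) ->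
  quotient_artinian J -> l \is 1.-homog ->
  (forall d i, D d -> mul_max_rank (initial_ideal lt I) (initial_ideal lt J) (l ^+ d) i d) ->
  exists2 l', l' \is 1.-homog & forall d i, D d -> mul_max_rank I J (l' ^+ d) i d.
Proof.
move=> k0 lt_term homI homJ JI artJ l1 maxl.
have [N JN] := artinian_homog_large homJ artJ.
pose ps := [seq (d, i) | d <- [seq d <- iota 0 N | D d], i <- iota 0 N].
have [c maxc] : exists c, forall p, p \in ps -> mul_max_rank I J (linform c ^+ p.1) p.2 p.1.
  apply/(generic_witness k0)/generic_all => _ /allpairsP[[d i] /= [+ _ ->]].
  rewrite mem_filter => /andP[Dd _].
  apply: (generic_mul_max_rank lt_term homI homJ JI (c' := fun j => l@_U_(j))) => /=.
  by rewrite -homog1_linform //; apply: maxl.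
exists (linform c) => [|d i Dd]; first exact: linform_homog.
have [iN|Ni] := ltnP i N; last by left=> f _ fi _; apply: JN fi.
have [dN|Nd] := ltnP d N.
  by apply: (maxc (d, i)); apply/allpairsP; exists (d, i); rewrite mem_filter Dd !mem_iota iN dN.
right=> h _ hid; exists 0; rewrite mulr0 subr0 dhomog0; split=> //; first by case: homI => [[]].
by apply: JN hid; rewrite (leq_trans Nd) ?leq_addl.
Qed.

Theorem lemma3p8 (k : fieldType) (n : nat) (I J : {mpoly k[n]} -> Prop)
    (lt : rel 'X_{1..n}) :
  [pchar k] =i pred0 ->
  is_homogeneous_ideal I -> is_homogeneous_ideal J ->
  (forall f, J f -> I f) ->
  quotient_artinian J ->
  term_order lt ->
  (has_WLP (initial_ideal lt I) (initial_ideal lt J) -> has_WLP I J) /\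
  (has_SLP (initial_ideal lt I) (initial_ideal lt J) -> has_SLP I J).
Proof.
move=> k0 homI homJ JI artJ lt_term; split=> -[l [l1 maxl]].
  have [|l' l'1 maxl'] :=
    lefschetz_transfer (D := pred1 1%N) k0 lt_term homI homJ JI artJ l1.
    by move=> d i /eqP->; rewrite expr1.
  by exists l'; split=> // i; rewrite -[l']expr1; apply: maxl'.
have [|l' l'1 maxl'] :=
  lefschetz_transfer (D := fun d => (0 < d)%N) k0 lt_term homI homJ JI artJ l1.
  by move=> d i /maxl.
by exists l'; split=> // d /maxl'.
Qed.
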